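(* Let $\Gamma$ be a strongly regular Neumaier graph with parameters $(n,k,\lambda,\mu;a,c)$. Then $\Gamma$ has exactly three distinct eigenvalues, namely $k$, $c-a-1$, and $-\frac{\mu}{a}$. Moreover, $-\frac{\mu}{a}$ is an integer.
   Context: All graphs are finite, simple, undirected and connected; eigenvalues are those of the adjacency matrix. A graph is edge-regular with parameters $(n,k,\lambda)$ if it has $n$ vertices, is $k$-regular, and any two adjacent vertices have exactly $\lambda$ common neighbours. A clique $C$ is a regular clique with nexus $a$ if every vertex not in $C$ has exactly $a$ neighbours in $C$. A Neumaier graph is a non-complete edge-regular graph containing a regular clique; it has parameters $(n,k,\lambda;a,c)$ if it is edge-regular with parameters $(n,k,\lambda)$ and contains a regular clique of size $c$ with nexus $a$. A strongly regular graph with parameters $(n,k,\lambda,\mu)$ is a non-complete connected $k$-regular graph on $n$ vertices in which adjacent vertices have $\lambda$ common neighbours and non-adjacent vertices have $\mu$ common neighbours. A strongly regular Neumaier graph with parameters $(n,k,\lambda,\mu;a,c)$ is a strongly regular graph with parameters $(n,k,\lambda,\mu)$ which is a Neumaier graph with parameters $(n,k,\lambda;a,c)$. *)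

From HB Require Import structures.
From mathcomp Require Import all_boot all_order all_algebra all_field.
Set Implicit Arguments. Unset Strict Implicit. Unset Printing Implicit Defensive.
Import Order.TTheory GRing.Theory Num.Theory.

Definition simple_graph (n : nat) (e : rel 'I_n) : Prop :=
  symmetric e /\ irreflexive e.

Definition connected_graph (n : nat) (e : rel 'I_n) : Prop :=
  forall x y : 'I_n, connect e x y.

Definition non_complete (n : nat) (e : rel 'I_n) : Prop :=
  exists x y : 'I_n, x != y /\ ~~ e x y.

Definition k_regular (n : nat) (e : rel 'I_n) (k : nat) : Prop :=
  forall x : 'I_n, #|[set y | e x y]| = k.

Definition edge_regular (n : nat) (e : rel 'I_n) (k lambda : nat) : Prop :=
  k_regular e k /\
  forall x y : 'I_n, e x y -> #|[set z | e x z && e y z]| = lambda.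

Definition is_clique (n : nat) (e : rel 'I_n) (C : {set 'I_n}) : Prop :=
  forall x y, x \in C -> y \in C -> x != y -> e x y.

Definition regular_clique (n : nat) (e : rel 'I_n) (C : {set 'I_n}) (a : nat)
  : Prop :=
  is_clique e C /\ C != set0 /\
  forall x, x \notin C -> #|[set y in C | e x y]| = a.

Definition neumaier_graph (n : nat) (e : rel 'I_n) (k lambda a c : nat) : Prop :=
  edge_regular e k lambda /\ non_complete e /\
  exists C : {set 'I_n}, regular_clique e C a /\ #|C| = c.

Definition strongly_regular (n : nat) (e : rel 'I_n) (k lambda mu : nat) : Prop :=
  non_complete e /\ connected_graph e /\ edge_regular e k lambda /\
  forall x y : 'I_n, x != y -> ~~ e x y -> #|[set z | e x z && e y z]| = mu.

Definition sr_neumaier_graph (n : nat) (e : rel 'I_n) (k lambda mu a c : nat)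
  : Prop :=
  strongly_regular e k lambda mu /\ neumaier_graph e k lambda a c.

Definition adjacency (n : nat) (e : rel 'I_n) : 'M[algC]_n :=
  \matrix_(i, j) ((e i j)%:R)%R.

From HB Require Import structures.
From mathcomp Require Import all_boot all_order all_algebra all_field.
From mathcomp Require Import ring zify.
Import Order.TTheory GRing.Theory Num.Theory.
Set Implicit Arguments. Unset Strict Implicit. Unset Printing Implicit Defensive.
Local Open Scope ring_scope.

(* Count the pairs (y, z) with y in the regular clique C and z a common neighbour of a
   vertex x and y, once for x in C and once for x outside C.  The two resulting linear
   relations between k, lambda, mu, a and c = #|C| force (c - 1) mu = a k, which says
   exactly that r = c - a - 1 and s = - mu / a satisfy r + s = lambda - mu and
   r s = mu - k.  Hence the strongly regular identity A^2 = k I + lambda A + mu (J - I - A)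
   factors as (A - r I)(A - s I) = mu J.  As A J = k J, a row eigenvector of A for an
   eigenvalue other than k is killed by J, so the eigenvalue is r or s.  Conversely, if
   A - r I were invertible then A - s I = mu J (A - r I)^-1 would have equal rows, which
   fails on two distinct non-adjacent vertices; symmetrically for s on an edge.  Finally
   s = lambda - mu - r is an integer. *)

Lemma card_set_sum (T : finType) (P : pred T) : #|[set x | P x]| = (\sum_x P x)%N.
Proof. by rewrite -sum1dep_card big_mkcond; apply: eq_bigr => x _; case: (P x). Qed.

Lemma neumaier_nexus_identity (F : fieldType) (k l m a c : F) : c - a != 0 ->
  k + (c - 1) * l = (c - 1) * (c - 1) + (k - (c - 1)) * a ->
  a * l + (c - a) * m = a * (c - 1) + (k - a) * a ->
  (c - 1) * m = a * k.
Proof.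
move=> ca_neq0 in_count out_count.
have : (c - a) * ((c - 1) * m - a * k) = 0.
  transitivity ((c - 1) * (a * l + (c - a) * m - (a * (c - 1) + (k - a) * a))
    - a * (k + (c - 1) * l - ((c - 1) * (c - 1) + (k - (c - 1)) * a))); first by ring.
  by rewrite in_count out_count !subrr !mulr0 subrr.
by move/eqP; rewrite mulf_eq0 (negPf ca_neq0) subr_eq0 => /eqP.
Qed.

Lemma neumaier_eigenvalue_relations (F : fieldType) (k l m a c : F) : a != 0 ->
  a * l + (c - a) * m = a * (c - 1) + (k - a) * a -> (c - 1) * m = a * k ->
  (c - a - 1) + - (m / a) = l - m /\ (c - a - 1) * - (m / a) = m - k.
Proof.
move=> a_neq0 out_count nexus_id; have mNa : - (m / a) * a = - m by rewrite mulNr divfK.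
split; apply: (mulIf a_neq0); apply/eqP; rewrite -subr_eq0; apply/eqP.
  rewrite mulrDl mNa.
  transitivity ((c - 1) * m - a * k
    - (a * l + (c - a) * m - (a * (c - 1) + (k - a) * a))); first by ring.
  by rewrite nexus_id out_count !subrr.
rewrite -mulrA mNa.
transitivity (a * k - (c - 1) * m); first by ring.
by rewrite nexus_id subrr.
Qed.

Lemma natr_neq_neg_div (F : numFieldType) (p q a : nat) :
  (0 < a)%N -> (0 < q)%N -> p%:R != - (q%:R / a%:R) :> F.
Proof.
move=> a_gt0 q_gt0; apply/eqP => p_eq.
have a_neq0 : a%:R != 0 :> F by rewrite pnatr_eq0 -lt0n.
have : (p * a + q)%:R == 0 :> F by rewrite natrD natrM p_eq mulNr divfK // addNr.
by rewrite pnatr_eq0 addn_eq0 (gtn_eqF q_gt0) andbF.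
Qed.

Lemma uniq_natr_natr_neg_div (F : numFieldType) (p q m a : nat) :
  p != q -> (0 < m)%N -> (0 < a)%N -> uniq [:: p%:R; q%:R; - (m%:R / a%:R) : F].
Proof.
by move=> pq m_gt0 a_gt0; rewrite /= !inE !negb_or eqr_nat pq !natr_neq_neg_div.
Qed.

Section QuadraticSpectrum.

Variables (F : fieldType) (n : nat) (A : 'M[F]_n).
Local Notation J := (const_mx 1 : 'M[F]_n).

Lemma eigenvalueE t : eigenvalue A t = (A - t%:M \notin unitmx).
Proof. by rewrite /eigenvalue /eigenspace kermx_eq0 row_free_unit. Qed.

Lemma const_mulmx_rows (m : F) (B : 'M[F]_n) i i' j :
  ((m *: J) *m B) i j = ((m *: J) *m B) i' j.
Proof. by rewrite !mxE; apply: eq_bigr => l _; rewrite !mxE. Qed.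

Lemma eigenvalue_const_row (k : F) :
  (0 < n)%N -> (const_mx 1 : 'rV[F]_n) *m A = k *: const_mx 1 -> eigenvalue A k.
Proof.
move=> n_gt0 JA; apply/eigenvalueP; exists (const_mx 1) => //.
by apply/eqP => /matrixP/(_ 0 (Ordinal n_gt0))/eqP; rewrite !mxE oner_eq0.
Qed.

Lemma eigenvalue_quadratic (k r s m x : F) :
  A *m J = k *: J -> (A - r%:M) *m (A - s%:M) = m *: J ->
  eigenvalue A x -> x \in [:: k; r; s].
Proof.
move=> AJ ArAs /eigenvalueP[v vA v_neq0].
have vAt t : v *m (A - t%:M) = (x - t) *: v by rewrite mulmxBr mul_mx_scalar vA scalerBl.
have : (x - k) *: (v *m J) = 0.
  by rewrite scalemxAl -vAt -mulmxA mulmxBl AJ mul_scalar_mx subrr mulmx0.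
move/eqP; rewrite scaler_eq0 subr_eq0 => /orP[/eqP->|/eqP vJ0]; first exact: mem_head.
have : ((x - r) * (x - s)) *: v = 0.
  by rewrite -scalerA -vAt scalemxAl -vAt -mulmxA ArAs -scalemxAr vJ0 scaler0.
move/eqP; rewrite scaler_eq0 (negPf v_neq0) orbF mulf_eq0 !subr_eq0 !inE.
by case/orP => ->; rewrite ?orbT.
Qed.

Lemma eigenvalue_of_rows_neq (r s m : F) i i' j :
  (A - s%:M) *m (A - r%:M) = m *: J -> (A - s%:M) i j != (A - s%:M) i' j ->
  eigenvalue A r.
Proof.
move=> AsAr; apply: contraR; rewrite eigenvalueE negbK => Ar_unit.
by rewrite -(mulmxK Ar_unit (A - s%:M)) AsAr (const_mulmx_rows _ _ i i').
Qed.

Lemma srg_eqn_factor (k l m r s : F) :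
  A *m A = k%:M + l *: A + m *: (J - 1%:M - A) ->
  r + s = l - m -> r * s = m - k ->
  (A - r%:M) *m (A - s%:M) = m *: J.
Proof.
move=> AA rs_sum rs_prod.
rewrite mulmxBl !mulmxBr mul_mx_scalar mul_scalar_mx -scalar_mxM AA.
have -> : l = r + s + m by rewrite rs_sum subrK.
have -> : k = m - r * s by rewrite rs_prod opprB addrC subrK.
by apply/matrixP => i j; rewrite !mxE; case: (i == j); rewrite /=; ring.
Qed.

End QuadraticSpectrum.

Section Adjacency.

Variables (n : nat) (e : rel 'I_n).
Hypotheses (e_sym : symmetric e) (e_irr : irreflexive e).
Local Notation A := (adjacency e).
Local Notation J := (const_mx 1 : 'M[algC]_n).

Lemma adjacency_mul_const k : k_regular e k -> A *m J = k%:R *: J.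
Proof.
move=> e_deg; apply/matrixP => i j; rewrite !mxE mulr1 -(e_deg i) card_set_sum natr_sum.
by apply: eq_bigr => z _; rewrite !mxE mulr1.
Qed.

Lemma const_mul_adjacency k : k_regular e k ->
  (const_mx 1 : 'rV[algC]_n) *m A = k%:R *: const_mx 1.
Proof.
move=> e_deg; apply/matrixP => i j; rewrite !mxE mulr1 -(e_deg j) card_set_sum natr_sum.
by apply: eq_bigr => z _; rewrite !mxE mul1r e_sym.
Qed.

Lemma adjacency_sqr k lambda mu : edge_regular e k lambda ->
  (forall x y, x != y -> ~~ e x y -> #|[set z | e x z && e y z]| = mu) ->
  A *m A = k%:R%:M + lambda%:R *: A + mu%:R *: (J - 1%:M - A).
Proof.
move=> [e_deg e_lambda] e_mu; apply/matrixP => i j; rewrite !mxE.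
have -> : \sum_z A i z * A z j = #|[set z | e i z && e j z]|%:R.
  rewrite card_set_sum natr_sum; apply: eq_bigr => z _; rewrite !mxE (e_sym z j).
  by case: (e i z); case: (e j z); rewrite ?mulr1 ?mulr0.
have [<-|ij] := eqVneq i j.
  rewrite e_irr mulr0 mulr1n subrr subr0 mulr0 !addr0 -(e_deg i).
  by congr (_%:R); apply: eq_card => z; rewrite !inE andbb.
rewrite mulr0n add0r subr0; case: (boolP (e i j)) => [eij|neij].
  by rewrite e_lambda // mulr1 subrr mulr0 addr0.
by rewrite e_mu // mulr0 add0r subr0 mulr1.
Qed.

Lemma adjacency_shift_diag t x : (A - t%:M) x x = - t.
Proof. by rewrite !mxE e_irr eqxx mulr1n sub0r. Qed.

Lemma adjacency_shift_offdiag t x y : x != y -> (A - t%:M) x y = (e x y)%:R.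
Proof. by move=> xy; rewrite !mxE (negPf xy) mulr0n subr0. Qed.

Lemma eigenvalue_adjacency_nonedge r s m x y : x != y -> ~~ e x y -> s != 0 ->
  (A - s%:M) *m (A - r%:M) = m *: J -> eigenvalue A r.
Proof.
move=> xy nexy s_neq0 AsAr; apply: (eigenvalue_of_rows_neq AsAr (i := x) (i' := y) (j := x)).
rewrite adjacency_shift_diag adjacency_shift_offdiag; last by rewrite eq_sym.
by rewrite e_sym (negPf nexy) mulr0n oppr_eq0.
Qed.

Lemma eigenvalue_adjacency_edge r s m x y : e x y -> r + 1 != 0 ->
  (A - r%:M) *m (A - s%:M) = m *: J -> eigenvalue A s.
Proof.
move=> exy r1_neq0 ArAs; apply: (eigenvalue_of_rows_neq ArAs (i := x) (i' := y) (j := x)).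
have yx : y != x by apply: contraTneq exy => ->; rewrite e_irr.
by rewrite adjacency_shift_diag adjacency_shift_offdiag // e_sym exy eq_sym -addr_eq0 addrC.
Qed.

End Adjacency.

Section SRNeumaier.

Variables (n : nat) (e : rel 'I_n) (k lambda mu a : nat) (C : {set 'I_n}).
Hypotheses (e_sym : symmetric e) (e_irr : irreflexive e).
Hypotheses (e_reg : edge_regular e k lambda) (C_clique : is_clique e C).
Hypothesis e_mu :
  forall x y, x != y -> ~~ e x y -> #|[set z | e x z && e y z]| = mu.
Hypothesis C_nexus : forall x, x \notin C -> #|[set y in C | e x y]| = a.
Hypotheses (e_conn : connected_graph e) (e_nc : non_complete e) (C_neq0 : C != set0).

Let e_deg : k_regular e k := proj1 e_reg.

Lemma clique_nbrs z : z \in C -> [set y in C | e z y] = C :\ z.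
Proof.
move=> zC; apply/setP => y; rewrite !inE.
have [->|yz] /= := eqVneq y z; first by rewrite e_irr andbF.
by apply/andb_idr => yC; apply: C_clique; rewrite // eq_sym.
Qed.

Lemma card_clique_nbrs z : z \in C -> #|[set y in C | e z y]| = (#|C| - 1)%N.
Proof. by move=> zC; rewrite clique_nbrs // (cardsD1 z C) zC add1n subn1. Qed.

Lemma sum_card_clique_nbrs (S : {set 'I_n}) :
  (\sum_(z in S) #|[set y in C | e z y]|
     = #|S :&: C| * (#|C| - 1) + #|S :\: C| * a)%N.
Proof.
rewrite (big_setID C) /= -!sum_nat_const.
congr (_ + _); apply: eq_bigr => z; rewrite !inE.
  by case/andP=> _; apply: card_clique_nbrs.
by case/andP=> /C_nexus.
Qed.

Lemma sum_card_common_nbrs x :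
  (\sum_(y in C) #|[set z | e x z && e y z]|
     = \sum_(z in [set z | e x z]) #|[set y in C | e z y]|)%N.
Proof.
transitivity (\sum_(y in C) \sum_(z in [set z | e x z]) (e z y : nat))%N.
  apply: eq_bigr => y _; rewrite card_set_sum [RHS]big_mkcond; apply: eq_bigr => z _.
  by rewrite inE (e_sym y); case: (e x z).
rewrite exchange_big; apply: eq_bigr => z _; rewrite card_set_sum [LHS]big_mkcond.
by apply: eq_bigr => y _; case: (y \in C).
Qed.

Lemma card_nbrs_setD x :
  #|[set z | e x z] :\: C| = (k - #|[set z | e x z] :&: C|)%N.
Proof. by rewrite -(e_deg x) -(cardsID C [set z | e x z]) addKn. Qed.

Lemma card_clique_le_deg x : x \in C -> (#|C| - 1 <= k)%N.
Proof.
by move=> xC; rewrite -(card_clique_nbrs xC) -(e_deg x) subset_leq_card // setIdE subsetIr.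
Qed.

Lemma clique_vertex_count x : x \in C ->
  (k + (#|C| - 1) * lambda = (#|C| - 1) * (#|C| - 1) + (k - (#|C| - 1)) * a)%N.
Proof.
move=> xC; have := sum_card_common_nbrs x.
have card_nbrs_C : #|[set z | e x z] :&: C| = (#|C| - 1)%N.
  by rewrite setIC -setIdE card_clique_nbrs.
rewrite sum_card_clique_nbrs card_nbrs_setD card_nbrs_C => <-.
rewrite (big_setD1 x xC) /= (eq_bigr (fun _ => lambda)) => [|y /setD1P[yx yC]].
  rewrite sum_nat_const -(clique_nbrs xC) card_clique_nbrs // -(e_deg x).
  by congr (_ + _); apply: eq_card => z; rewrite !inE andbb.
by apply: (proj2 e_reg x y); apply: C_clique; rewrite // eq_sym.
Qed.

Lemma outside_vertex_count x : x \notin C ->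
  (a * lambda + (#|C| - a) * mu = a * (#|C| - 1) + (k - a) * a)%N.
Proof.
move=> xC; have := sum_card_common_nbrs x.
have card_C_nbrs : #|C :&: [set z | e x z]| = a by rewrite -setIdE C_nexus.
rewrite sum_card_clique_nbrs card_nbrs_setD setIC card_C_nbrs => <-.
have card_C_nonnbrs : #|C :\: [set z | e x z]| = (#|C| - a)%N.
  by rewrite -(cardsID [set z | e x z] C) card_C_nbrs addKn.
rewrite (big_setID [set z | e x z]) /= -{1}card_C_nbrs -card_C_nonnbrs -!sum_nat_const.
congr (_ + _); apply: eq_bigr => y; rewrite !inE => /andP[].
  by move=> _ /(proj2 e_reg x y) ->.
by move=> nxy yC; rewrite e_mu //; apply: contraNneq xC => ->.
Qed.

Lemma nexus_le_card x : x \notin C -> (a <= #|C|)%N.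
Proof. by move/C_nexus <-; rewrite subset_leq_card // setIdE subsetIl. Qed.

Lemma nexus_le_deg x : x \notin C -> (a <= k)%N.
Proof. by move/C_nexus <-; rewrite -(e_deg x) subset_leq_card // setIdE subsetIr. Qed.

Lemma exists_outside_clique : exists w, w \notin C.
Proof.
have [x [y [xy nexy]]] := e_nc; case: (boolP (x \in C)) => xC; last by exists x.
by case: (boolP (y \in C)) => yC; [rewrite C_clique in nexy | exists y].
Qed.

Lemma nexus_gt0 : (0 < a)%N.
Proof.
have [a0|//] := posnP a.
have cross_edge x y : x \in C -> y \notin C -> ~~ e x y.
  move=> xC yC; apply: contra_eqN (C_nexus yC) => exy.
  by rewrite a0 -lt0n; apply/card_gt0P; exists x; rewrite inE xC e_sym.
have C_closed : closed e C.
  move=> x y exy; apply/idP/idP => [xC|yC]; apply: contraT => nC.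
    by rewrite (negPf (cross_edge x y xC nC)) in exy.
  by rewrite e_sym (negPf (cross_edge y x yC nC)) in exy.
have [u uC] := set0Pn _ C_neq0; have [w wC] := exists_outside_clique.
by move: (closed_connect C_closed (e_conn u w)); rewrite uC (negPf wC).
Qed.

Lemma nexus_lt_card : (a < #|C|)%N.
Proof.
have [u uC] := set0Pn _ C_neq0; have [w wC] := exists_outside_clique.
rewrite ltn_neqAle (nexus_le_card wC) andbT; apply/eqP => a_C.
have Nu : [set z | e u z] = [set~ u].
  apply/setP => y; rewrite !inE; have [->|yu] /= := eqVneq y u; first exact: e_irr.
  case: (boolP (y \in C)) => yC; first by apply: C_clique; rewrite // eq_sym.
  have : [set z in C | e y z] = C.
    by apply/eqP; rewrite eqEcard C_nexus // a_C leqnn setIdE subsetIl.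
  by move/setP/(_ u); rewrite !inE uC e_sym.
have [x [y [xy nexy]]] := e_nc.
have : [set z | e x z] \proper [set~ x].
  apply/properP; split; last by exists y; rewrite !inE // eq_sym.
  by apply/subsetP => z; rewrite !inE; apply: contraTneq => ->; rewrite e_irr.
by move/proper_card; rewrite (e_deg x) cardsC1 -(e_deg u) Nu cardsC1 ltnn.
Qed.

Local Notation A := (adjacency e).
Local Notation J := (const_mx 1 : 'M[algC]_n).
Local Notation r := (#|C|%:R - a%:R - 1 : algC).
Local Notation s := (- (mu%:R / a%:R) : algC).

Lemma r_natr : r = (#|C| - a - 1)%:R.
Proof. by have a_lt_C := nexus_lt_card; rewrite !natrB ?subn_gt0 // ltnW. Qed.

Lemma sr_neumaier_relations : r + s = lambda%:R - mu%:R /\ r * s = mu%:R - k%:R.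
Proof.
have [u uC] := set0Pn _ C_neq0; have [w wC] := exists_outside_clique.
have C_gt0 : (0 < #|C|)%N := leq_ltn_trans (leq0n a) nexus_lt_card.
have C_le_deg := card_clique_le_deg uC.
have a_le_deg := nexus_le_deg wC.
have a_le_C := ltnW nexus_lt_card.
have in_count := congr1 (fun t => t%:R : algC) (clique_vertex_count uC).
have out_count := congr1 (fun t => t%:R : algC) (outside_vertex_count wC).
rewrite /= !natrD !natrM !natrB // in in_count out_count.
apply: (neumaier_eigenvalue_relations _ out_count).
  by rewrite pnatr_eq0 -lt0n nexus_gt0.
apply: neumaier_nexus_identity in_count out_count.
by rewrite subr_eq0 eqr_nat gtn_eqF ?nexus_lt_card.
Qed.

Lemma deg_gt0 : (0 < k)%N.
Proof.
have [w wC] := exists_outside_clique; exact: leq_trans nexus_gt0 (nexus_le_deg wC).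
Qed.

Lemma mu_gt0 : (0 < mu)%N.
Proof.
rewrite lt0n; apply/eqP => mu0; move/eqP: (proj2 sr_neumaier_relations).
by rewrite mu0 mulr0n mul0r oppr0 mulr0 sub0r eq_sym oppr_eq0 pnatr_eq0 gtn_eqF ?deg_gt0.
Qed.

Lemma adjacency_factor : (A - r%:M) *m (A - s%:M) = mu%:R *: J.
Proof.
have [rs_sum rs_prod] := sr_neumaier_relations.
exact: srg_eqn_factor (adjacency_sqr e_sym e_irr e_reg e_mu) rs_sum rs_prod.
Qed.

Lemma adjacency_factorC : (A - s%:M) *m (A - r%:M) = mu%:R *: J.
Proof.
have [rs_sum rs_prod] := sr_neumaier_relations.
apply: srg_eqn_factor (adjacency_sqr e_sym e_irr e_reg e_mu) _ _.
  by rewrite addrC.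
by rewrite mulrC.
Qed.

Lemma sr_neumaier_eigenvalueP t : eigenvalue A t <-> t \in [:: k%:R; r; s].
Proof.
split; first exact: eigenvalue_quadratic (adjacency_mul_const e_deg) adjacency_factor.
have [x [y [xy nexy]]] := e_nc.
rewrite !inE => /or3P[] /eqP ->.
- exact: eigenvalue_const_row (leq_ltn_trans (leq0n x) (ltn_ord x))
    (const_mul_adjacency e_sym e_deg).
- apply: (eigenvalue_adjacency_nonedge e_sym e_irr xy nexy _ adjacency_factorC).
  by rewrite oppr_eq0 mulf_eq0 invr_eq0 !pnatr_eq0 negb_or -!lt0n mu_gt0 nexus_gt0.
- have /card_gt0P[z] : (0 < #|[set z | e x z]|)%N by rewrite e_deg deg_gt0.
  rewrite inE => exz; apply: (eigenvalue_adjacency_edge e_sym e_irr exz _ adjacency_factor).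
  by rewrite r_natr natr1 pnatr_eq0.
Qed.

Lemma sr_neumaier_eigenvalues_uniq : uniq [:: k%:R; r; s].
Proof.
rewrite r_natr uniq_natr_natr_neg_div ?mu_gt0 ?nexus_gt0 //.
have [u uC] := set0Pn _ C_neq0.
have := card_clique_le_deg uC; have := nexus_gt0; have := nexus_lt_card; lia.
Qed.

Lemma sr_neumaier_eigenvalue_int : exists z : int, s = z%:~R.
Proof.
exists (lambda%:Z - mu%:Z - (#|C| - a - 1)%:Z).
by rewrite !rmorphB /= -!pmulrn -r_natr -(proj1 sr_neumaier_relations) addrC addKr.
Qed.

End SRNeumaier.

Theorem proposition3p6 (n : nat) (e : rel 'I_n) (k lambda mu a c : nat) :
  simple_graph e -> connected_graph e ->
  sr_neumaier_graph e k lambda mu a c ->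
  let theta1 : algC := k%:R in
  let theta2 : algC := c%:R - a%:R - 1 in
  let theta3 : algC := - (mu%:R / a%:R) in
  (forall x : algC, eigenvalue (adjacency e) x <-> x \in [:: theta1; theta2; theta3])
  /\ uniq [:: theta1; theta2; theta3]
  /\ (exists z : int, theta3 = z%:~R).
Proof.
move=> [e_sym e_irr] e_conn [[e_nc [_ [e_reg e_mu]]] [_ [_ [C [[C_clique [C_neq0 C_nexus]] <-]]]]].
move=> theta1 theta2 theta3; rewrite {}/theta1 {}/theta2 {}/theta3.
split; last split.
- exact: (sr_neumaier_eigenvalueP e_sym e_irr e_reg C_clique e_mu C_nexus e_conn e_nc C_neq0).
- exact: (sr_neumaier_eigenvalues_uniq e_sym e_irr e_reg C_clique e_mu C_nexus e_conn e_nc C_neq0).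
- exact: (sr_neumaier_eigenvalue_int e_sym e_irr e_reg C_clique e_mu C_nexus e_conn e_nc C_neq0).
Qed.
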